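(* For all $m,t\in\mathbb{N}$, \[ R_t(1,m) \leq \left(1-\frac{1}{2^t}\right)2^m-\frac{\sqrt{2^t-1}}{2^t}\,2^{m/2}. \]
   Context: For a $t\times n$ matrix $\mathbf{v}$ over $\mathbb{F}_2$ with rows $\overline{v}_1,\dots,\overline{v}_t$, $\mathrm{wt}^{(t)}(\mathbf{v})=\left|\bigcup_{i} \mathrm{supp}(\overline{v}_i)\right|$ and $d^{(t)}(\mathbf{u},\mathbf{v})=\mathrm{wt}^{(t)}(\mathbf{u}-\mathbf{v})$. For a linear code $C\subseteq\mathbb{F}_2^n$, $C^t$ is the set of $t\times n$ matrices all of whose rows lie in $C$, and $R_t(C)$ is the smallest integer $\rho$ such that for every $\mathbf{v}\in\mathbb{F}_2^{t\times n}$ some $\mathbf{c}\in C^t$ has $d^{(t)}(\mathbf{v},\mathbf{c})\le\rho$. $\mathrm{RM}(1,m)$ is the first-order binary Reed–Muller code of length $2^m$ (evaluations of all affine functions $\mathbb{F}_2^m\to\mathbb{F}_2$; dimension $m+1$), with $\mathrm{RM}(1,1)=\mathbb{F}_2^2$. $R_t(1,m)=R_t(\mathrm{RM}(1,m))$. *)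

(* Binary words over F_2 are represented with bool (xor = addition). *)
From HB Require Import structures.
From mathcomp Require Import all_boot all_order all_algebra.
Set Implicit Arguments. Unset Strict Implicit. Unset Printing Implicit Defensive.
Import Order.TTheory GRing.Theory Num.Theory.

Definition pt (m : nat) := {ffun 'I_m -> bool}.
Definition word (P : finType) := {ffun P -> bool}.
Definition tmat (t : nat) (P : finType) := {ffun 'I_t -> word P}.

Definition wt_t (t : nat) (P : finType) (v : tmat t P) : nat :=
  #|[set p : P | [exists i : 'I_t, v i p]]|.

Definition d_t (t : nat) (P : finType) (u v : tmat t P) : nat :=
  wt_t [ffun i => [ffun p => u i p (+) v i p]].

Definition in_Ct (t : nat) (P : finType) (C : {set word P}) (c : tmat t P) : bool :=
  [forall i : 'I_t, c i \in C].

Definition covers_t (t : nat) (P : finType) (C : {set word P}) (rho : nat) : bool :=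
  [forall v : tmat t P, exists c : tmat t P, in_Ct C c && (d_t v c <= rho)].

(* Since d_t <= #|P| always, it suffices
   to search rho in [0, #|P|]; for C containing 0 (any linear code) rho = #|P|
   works, so this is exactly the least such integer. *)
Definition Rt (t : nat) (P : finType) (C : {set word P}) : nat :=
  \big[minn/#|P|]_(rho < #|P|.+1 | covers_t t C rho) rho.

Definition RM1 (m : nat) : {set word (pt m)} :=
  [set c : word (pt m) | [exists a0 : bool, exists a : {ffun 'I_m -> bool},
     [forall x : pt m, c x == a0 (+) \big[addb/false]_(i < m) (a i && x i)]]].

Definition Rt1 (t m : nat) : nat := Rt t (RM1 m).

From mathcomp Require Import all_boot all_order all_algebra.
From mathcomp Require Import reals.
From mathcomp Require Import ring lra.
Set Implicit Arguments. Unset Strict Implicit. Unset Printing Implicit Defensive.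
Import Order.TTheory GRing.Theory Num.Theory.
Local Open Scope ring_scope.

(* For S a set of points of F_2^m and f : S -> F_2, Parseval's identity for the
   Walsh transform of f on S yields a frequency u with |W(u)| >= sqrt|S|, so one
   of the two affine functions with linear part u agrees with f on at least
   (|S| + sqrt|S|)/2 points of S.  Choosing the codeword rows one at a time, each
   on the set where the previous rows already agree, the final agreement set A
   satisfies 2^t |A| >= 2^m + sqrt((2^t - 1) 2^m), by the subadditivity of the
   square root; the distance to the codeword matrix is 2^m - |A|. *)

Lemma sqrtrD_le (R : rcfType) (x y : R) : 0 <= x -> 0 <= y ->
  Num.sqrt (x + y) <= Num.sqrt x + Num.sqrt y.
Proof.
move=> x0 y0; have sx := sqrtr_ge0 x; have sy := sqrtr_ge0 y.
rewrite -[leRHS]ger0_norm ?addr_ge0 // -sqrtr_sqr ler_wsqrtr //.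
rewrite sqrrD !sqr_sqrtr //; have := mulr_ge0 sx sy; lra.
Qed.

Lemma agreement_bound_double (R : rcfType) (N k a b : R) :
  0 <= N -> 1 <= k -> 0 <= a ->
  N + Num.sqrt ((k - 1) * N) <= k * a -> a + Num.sqrt a <= 2 * b ->
  N + Num.sqrt ((2 * k - 1) * N) <= 2 * k * b.
Proof.
move=> N0 k1 a0 hNa hab.
have k0 : 0 <= k by lra.
have sqrt_kN : Num.sqrt (k * N) <= k * Num.sqrt a.
  rewrite -[k in leRHS]ger0_norm // -sqrtr_sqr -sqrtrM ?sqr_ge0 // ler_wsqrtr //.
  by rewrite expr2 -mulrA ler_wpM2l //; have := sqrtr_ge0 ((k - 1) * N); lra.
have sqrt_split : Num.sqrt ((2 * k - 1) * N)
    <= Num.sqrt ((k - 1) * N) + Num.sqrt (k * N).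
  have -> : (2 * k - 1) * N = (k - 1) * N + k * N by ring.
  by apply: sqrtrD_le; apply: mulr_ge0 => //; lra.
have : k * (a + Num.sqrt a) <= k * (2 * b) by apply: ler_wpM2l.
lra.
Qed.

Lemma disagreement_bound (R : rcfType) (N k a : R) : 0 <= N -> 1 <= k ->
  N + Num.sqrt ((k - 1) * N) <= k * a ->
  N - a <= (1 - 1 / k) * N - Num.sqrt (k - 1) / k * Num.sqrt N.
Proof.
move=> N0 k1; have k0 : 0 < k by lra.
have -> : (1 - 1 / k) * N - Num.sqrt (k - 1) / k * Num.sqrt N
    = N - (N + Num.sqrt (k - 1) * Num.sqrt N) / k by field; rewrite gt_eqF.
by rewrite lerD2l lerN2 ler_pdivrMr // -sqrtrM ?subr_ge0 // [a * k]mulrC.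
Qed.

Section MatrixAgreement.
Variable P : finType.
Implicit Types (S : {set P}) (C : {set word P}).

Definition agree_on S (f w : P -> bool) : {set P} := [set p in S | f p == w p].

Definition agree_mx t (v c : tmat t P) : {set P} := [set p | [forall i, v i p == c i p]].

Lemma d_t_agree_mx t (v c : tmat t P) : (d_t v c + #|agree_mx v c|)%N = #|P|.
Proof.
rewrite -(cardsC (agree_mx v c)) addnC; congr (_ + _)%N.
rewrite /d_t /wt_t; apply: eq_card => p; rewrite !inE negb_forall.
by apply: eq_existsb => i; rewrite !ffunE; case: (v i p); case: (c i p).
Qed.

Definition tmat_init t (v : tmat t.+1 P) : tmat t P := [ffun i => v (lift ord_max i)].

Definition tmat_rcons t (c : tmat t P) (w : word P) : tmat t.+1 P :=
  [ffun i => if unlift ord_max i is Some j then c j else w].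

Lemma in_Ct_rcons C t (c : tmat t P) w :
  in_Ct C (tmat_rcons c w) = in_Ct C c && (w \in C).
Proof.
apply/forallP/andP => [inC|[/forallP inC wC] i].
  split; last by have := inC ord_max; rewrite ffunE unlift_none.
  by apply/forallP => j; have := inC (lift ord_max j); rewrite ffunE liftK.
by rewrite ffunE; case: unliftP.
Qed.

Lemma agree_mx_rcons t (v : tmat t.+1 P) c w :
  agree_mx v (tmat_rcons c w) = agree_on (agree_mx (tmat_init v) c) (v ord_max) w.
Proof.
apply/setP => p; rewrite !inE; apply/forallP/andP => [agr|[/forallP agr agr_max] i].
  split; last by have := agr ord_max; rewrite ffunE unlift_none.
  by apply/forallP => j; have := agr (lift ord_max j); rewrite !ffunE liftK.
rewrite ffunE; case: unliftP => [j ->|-> //].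
by have := agr j; rewrite !ffunE.
Qed.

Lemma Rt_le C t rho : covers_t t C rho -> (rho <= #|P|)%N -> (Rt t C <= rho)%N.
Proof.
rewrite -ltnS => cov rho_lt.
exact: (@bigmin_le_cond _ _ _ _ (Ordinal rho_lt) (covers_t t C) val cov).
Qed.

Lemma natr_Rt_le (R : realDomainType) C t (B : R) :
  (forall v : tmat t P, exists2 c, in_Ct C c & (d_t v c)%:R <= B) -> (Rt t C)%:R <= B.
Proof.
move=> /fin_all_exists2 [c inC dB].
pose rho := (\max_(v : tmat t P) d_t v (c v))%N.
have cov : covers_t t C rho.
  by apply/forallP => v; apply/existsP; exists (c v); rewrite inC /rho (leq_bigmax v).
have rho_le : (rho <= #|P|)%N.
  by apply/bigmax_leqP => v _; rewrite -(d_t_agree_mx v (c v)) leq_addr.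
have [|v0 rhoE] := @bigop.eq_bigmax _ (fun v => d_t v (c v)).
  by apply/card_gt0P; exists [ffun => [ffun => false]].
by apply: le_trans (dB v0); rewrite ler_nat -rhoE Rt_le.
Qed.

End MatrixAgreement.

Section RowByRow.
Variables (R : rcfType) (P : finType) (C : {set word P}).

Hypothesis C_agree : forall (S : {set P}) (f : P -> bool),
  exists2 w, w \in C & #|S|%:R + Num.sqrt #|S|%:R <= 2 * #|agree_on S f w|%:R :> R.

Lemma exists_agree_mx t (v : tmat t P) : exists2 c, in_Ct C c &
  #|P|%:R + Num.sqrt ((2 ^+ t - 1) * #|P|%:R) <= 2 ^+ t * #|agree_mx v c|%:R :> R.
Proof.
elim: t v => [|t IH] v.
  exists v; first by apply/forallP => -[].
  have -> : agree_mx v v = setT by apply/setP => p; rewrite !inE; apply/forallP.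
  by rewrite expr0 subrr mul0r sqrtr0 addr0 mul1r cardsT.
have [c inC agr_c] := IH (tmat_init v).
have [w inC_w agr_w] := C_agree (agree_mx (tmat_init v) c) (v ord_max).
exists (tmat_rcons c w); first by rewrite in_Ct_rcons inC.
rewrite agree_mx_rcons exprS; apply: agreement_bound_double agr_c agr_w.
- exact: ler0n.
- by rewrite exprn_ege1 // ler1n.
- exact: ler0n.
Qed.

End RowByRow.

Section Walsh.
Variable m : nat.
Implicit Types (S : {set pt m}) (f : pt m -> bool) (p q u : pt m).

Definition dot (a x : pt m) : bool := \big[addb/false]_(i < m) (a i && x i).

Definition affine (b : bool) u : word (pt m) := [ffun x => b (+) dot u x].

Lemma affine_RM1 b u : affine b u \in RM1 m.
Proof.
rewrite inE; apply/existsP; exists b; apply/existsP; exists u.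
by apply/forallP => x; rewrite ffunE.
Qed.

Definition flip (i0 : 'I_m) u : pt m := [ffun j => u j (+) (j == i0)].

Lemma flipK i0 : involutive (flip i0).
Proof. by move=> u; apply/ffunP => j; rewrite !ffunE addbK. Qed.

Lemma dot_flip i0 u p : dot (flip i0 u) p = dot u p (+) p i0.
Proof.
rewrite /dot (eq_bigr (fun i => (u i && p i) (+) ((i == i0) && p i))); last first.
  by move=> i _; rewrite ffunE andb_addl.
rewrite big_split /=; congr (_ (+) _).
by rewrite (bigD1 i0) //= eqxx big1 ?addbF // => i /negbTE ->.
Qed.

Lemma card_pt : #|pt m| = (2 ^ m)%N.
Proof. by rewrite card_ffun card_bool card_ord. Qed.

Variable R : realDomainType.

Lemma sum_sign_dot p q :
  \sum_u (-1) ^+ (dot u p (+) dot u q) = if p == q then #|pt m|%:R else 0 :> R.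
Proof.
case: eqP => [<-|/eqP neq_pq].
  by rewrite -sum1_card natr_sum; apply: eq_bigr => u _; rewrite addbb.
have [i0 neq_i0] : exists i0, p i0 != q i0.
  apply/existsP; apply: contraR neq_pq; rewrite negb_exists => /forallP eq_pq.
  by apply/eqP/ffunP => i; apply/eqP; have := eq_pq i; rewrite negbK.
set s := \sum_u _; suff : s *+ 2 == 0 by rewrite mulrn_eq0 => /eqP.
(* Flipping coordinate [i0] is a bijection that negates every term. *)
have pq_i0 : p i0 (+) q i0 by move: neq_i0; case: (p i0); case: (q i0).
rewrite mulr2n {2}/s (reindex_inj (can_inj (flipK i0))) -big_split big1 //= => u _.
by rewrite !dot_flip addbACA pq_i0 (signr_addb _ _ true) mulrN1 subrr.
Qed.

Definition walsh S f u : R := \sum_(p in S) (-1) ^+ (f p (+) dot u p).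

Lemma walsh_parseval S f : \sum_u walsh S f u ^+ 2 = #|pt m|%:R * #|S|%:R.
Proof.
have pair_sum p q : \sum_u (-1) ^+ (f p (+) dot u p) * (-1) ^+ (f q (+) dot u q)
    = (-1) ^+ (f p (+) f q) * (if p == q then #|pt m|%:R else 0) :> R.
  rewrite -sum_sign_dot mulr_sumr; apply: eq_bigr => u _.
  by rewrite -!signr_addb addbACA.
rewrite /walsh; under eq_bigr => u _ do rewrite expr2 mulr_suml.
under eq_bigr => u _ do under eq_bigr => p _ do rewrite mulr_sumr.
rewrite exchange_big /= mulr_natr -sumr_const; apply: eq_bigr => p Sp.
rewrite exchange_big; under eq_bigr => q _ do rewrite pair_sum.
rewrite (bigD1 p Sp) /= eqxx addbb mul1r big1 ?addr0 // => q /andP[_ neq_qp].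
by rewrite eq_sym (negbTE neq_qp) mulr0.
Qed.

Lemma agree_on_affineN S f u :
  agree_on S f (affine true u) = S :\: agree_on S f (affine false u).
Proof.
apply/setP => p; rewrite !inE !ffunE /=.
by case: (p \in S); case: (f p); case: (dot u p).
Qed.

Lemma card_agree_on_affine S f u :
  (#|agree_on S f (affine false u)| + #|agree_on S f (affine true u)|)%N = #|S|.
Proof.
rewrite agree_on_affineN -[in RHS](cardsID (agree_on S f (affine false u))).
by rewrite (setIidPr _) //; apply/subsetP => p; rewrite inE => /andP[].
Qed.

Lemma walsh_agree S f u : walsh S f u =
  #|agree_on S f (affine false u)|%:R - #|agree_on S f (affine true u)|%:R.
Proof.
rewrite /walsh (big_setID (agree_on S f (affine false u))) -agree_on_affineN /=.
rewrite (setIidPr _); last by apply/subsetP => p; rewrite inE => /andP[].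
rewrite (eq_bigr (fun=> 1)) => [|p]; last first.
  by rewrite !inE ffunE => /andP[_ /eqP ->]; rewrite addbb.
rewrite [X in _ + X](eq_bigr (fun=> -1)) => [|p]; last first.
  by rewrite !inE ffunE => /andP[_ /eqP ->]; rewrite addNb addbb.
by rewrite !sumr_const mulNrn.
Qed.

Lemma exists_walsh_sqr_ge S f : exists u, #|S|%:R <= walsh S f u ^+ 2.
Proof.
apply/existsP; apply: contraT; rewrite negb_exists => /forallP small.
have : \sum_u walsh S f u ^+ 2 < \sum_(u : pt m) #|S|%:R.
  apply: ltr_sum => [|u _]; last by rewrite ltNge small.
  by apply/hasP; exists [ffun => false]; rewrite ?mem_index_enum.
by rewrite walsh_parseval sumr_const mulrC mulr_natr => /lt_eqF/eqP.
Qed.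

End Walsh.

Lemma RM1_agree (R : rcfType) m (S : {set pt m}) (f : pt m -> bool) :
  exists2 w, w \in RM1 m & #|S|%:R + Num.sqrt #|S|%:R <= 2 * #|agree_on S f w|%:R :> R.
Proof.
have [u] := exists_walsh_sqr_ge R S f.
have := card_agree_on_affine S f u; rewrite walsh_agree.
set a0 := #|agree_on S f (affine false u)|; set a1 := #|agree_on S f (affine true u)|.
move=> /(congr1 (fun n => n%:R : R)); rewrite natrD => <- /ler_wsqrtr.
rewrite sqrtr_sqr; have [a10|a01] := lerP a1%:R a0%:R => le_sqrt.
  by exists (affine false u); [exact: affine_RM1 | lra].
by exists (affine true u); [exact: affine_RM1 | lra].
Qed.

Theorem lemma10 (R : realType) (m t : nat) :
  (Rt1 t m)%:R <=
    (1 - 1 / 2 ^+ t) * 2 ^+ m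
    - Num.sqrt (2 ^+ t - 1) / 2 ^+ t * Num.sqrt (2 ^+ m) :> R.
Proof.
apply: natr_Rt_le => v.
have [c inC agr] := exists_agree_mx (@RM1_agree R m) v.
exists c => //.
have -> : (d_t v c)%:R = 2 ^+ m - #|agree_mx v c|%:R :> R.
  by rewrite -natrX -card_pt -(d_t_agree_mx v c) natrD addrK.
rewrite card_pt natrX in agr; apply: disagreement_bound agr.
- exact: exprn_ge0.
- by rewrite exprn_ege1 // ler1n.
Qed.
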